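(* The identities (A6) $x\wedge(y\wedge z)\approx y\wedge(z\wedge x)$, (J5') $x\approx (x'\wedge y)'\wedge(x'\wedge y')'$ form a 2-base for the variety $\mathbb{BA}$ of Boolean algebras (in the language $\langle\wedge,{}'\rangle$).
   Context: Algebras are of type $\langle \wedge, {}'\rangle$ with $\wedge$ binary and ${}'$ unary. The variety $\mathbb{BA}$ of Boolean algebras in this language consists of the algebras $\langle B,\wedge,{}'\rangle$ obtained from Boolean algebras by keeping only meet and complement (equivalently, the variety generated by the two-element Boolean algebra with meet and complement). A base for a variety is an independent set of identities (no identity in the set follows from the others) that defines the variety; an $n$-base is a base with exactly $n$ identities. *)

From Stdlib Require Import List Bool.
Import ListNotations.

Inductive term : Type :=
| Var : nat -> term
| Meet : term -> term -> term
| Comp : term -> term.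

Record algebra : Type := Algebra {
  carrier :> Type;
  ameet : carrier -> carrier -> carrier;
  acomp : carrier -> carrier
}.

Fixpoint eval (A : algebra) (v : nat -> A) (t : term) : A :=
  match t with
  | Var n => v n
  | Meet s u => ameet A (eval A v s) (eval A v u)
  | Comp s => acomp A (eval A v s)
  end.

Definition identity : Type := (term * term)%type.

Definition satisfies (A : algebra) (e : identity) : Prop :=
  forall v : nat -> A, eval A v (fst e) = eval A v (snd e).

Definition models (A : algebra) (E : list identity) : Prop :=
  forall e, In e E -> satisfies A e.

Definition consequence (E : list identity) (e : identity) : Prop :=
  forall A : algebra, models A E -> satisfies A e.

Definition two : algebra := Algebra bool andb negb.

(* The variety BA = the variety generated by the two-element Boolean algebra,
   i.e. the class of algebras satisfying every identity true in [two]. *)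
Definition in_BA (A : algebra) : Prop :=
  forall e : identity, satisfies two e -> satisfies A e.

Definition defines (E : list identity) (V : algebra -> Prop) : Prop :=
  forall A : algebra, models A E <-> V A.

Definition remove_at {X : Type} (i : nat) (l : list X) : list X :=
  firstn i l ++ skipn (S i) l.

Definition independent (E : list identity) : Prop :=
  forall i d, i < length E -> ~ consequence (remove_at i E) (nth i E d).

Definition is_base (E : list identity) (V : algebra -> Prop) : Prop :=
  defines E V /\ independent E.

Definition is_n_base (n : nat) (E : list identity) (V : algebra -> Prop) : Prop :=
  length E = n /\ is_base E V.

Definition x := Var 0.
Definition y := Var 1.
Definition z := Var 2.

Definition A6 : identity := (Meet x (Meet y z), Meet y (Meet z x)).

Definition J5' : identity :=
  (x, Meet (Comp (Meet (Comp x) y)) (Comp (Meet (Comp x) (Comp y)))).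

(* (A6) says that [x (y z)] is invariant under cyclic rotation, and (J5') is
   the meet-dual of Huntington's axiom.  Writing an element as
   [x = (x' y)' (x' y')'] and rotating products around this decomposition gives
   [z x x = z (x x)], then [x x y = x (x y)], and finally commutativity, hence
   associativity.  A commutative semigroup with Huntington's axiom is Boolean:
   complement is an involution, [x x'] is a constant absorbing element whose
   complement is a unit, and meet is idempotent.  So every element is determined
   by its meets with the minterms of the variables, and each minterm either
   absorbs or annihilates a term according to the value of the term in the
   two-element algebra; this proves completeness.  Independence: the left
   projection with identity complement satisfies (J5') but not (A6), and the
   constantly false meet with negation satisfies (A6) but not (J5'). *)

From Stdlib Require Import ssreflect Arith Lia List.
Import ListNotations.

Local Notation "x * y" := (ameet _ x y) (at level 40, left associativity).
Local Notation "x ^'" := (acomp _ x) (at level 2, left associativity, format "x ^'").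

Section Rotation.

Variable A : algebra.

Hypothesis meet_rotate : forall x y z : A, x * (y * z) = y * (z * x).
Hypothesis huntington : forall x y : A, (x^' * y)^' * (x^' * y^')^' = x.

Lemma huntington_rotate (x y z : A) : (x^' * y)^' * ((x^' * y^')^' * z) = z * x.
Proof. by rewrite meet_rotate meet_rotate huntington. Qed.

Lemma huntington_dn_meet (x y : A) : (x^' * y^'^')^' * x = (x^' * y)^' * x.
Proof. by rewrite -(huntington_rotate x y) huntington. Qed.

Lemma huntington_dn_rotate (x y z : A) :
  (x^' * y^'^')^' * z * x = x * ((x^' * y)^' * z).
Proof.
by rewrite -(huntington_rotate x y) (huntington_rotate x y^' z) [RHS]meet_rotate.
Qed.

Lemma huntington_dn_rotate_r (x y z : A) :
  x * (y * (x^' * z^'^')^') = y * ((x^' * z)^' * x).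
Proof. by rewrite meet_rotate huntington_dn_meet. Qed.

Lemma huntington_dn_sq (x y : A) :
  (x^' * y^'^')^' * (x^' * y^'^'^'^'^')^' * x = x * x.
Proof.
rewrite huntington_dn_rotate huntington_dn_rotate_r -(meet_rotate x).
by rewrite huntington_dn_rotate_r -(meet_rotate x) huntington.
Qed.

Lemma meet_sq_r (x y : A) : x * y * y = x * (y * y).
Proof.
rewrite -(huntington_rotate y y^'^'^'^' x) huntington_dn_rotate.
by rewrite -[in RHS](huntington_dn_sq y y) -(meet_rotate y x) (meet_rotate x).
Qed.

Lemma meet_sq_l (x y : A) : x * x * y = x * (x * y).
Proof.
by rewrite -(huntington_rotate y x (x * x)) -meet_sq_r -(meet_rotate x) huntington_rotate.
Qed.

Lemma huntington_rotate_r (x y z : A) : (z * (x^' * y))^' * (x^' * (y * z)^')^' = x.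
Proof. by rewrite meet_rotate huntington. Qed.

Lemma huntington_commute_r (x y : A) : (x^' * y^')^' * x = x * (x^' * y^')^'.
Proof. by rewrite -(huntington_rotate x y) -meet_sq_r huntington. Qed.

Lemma huntington_commute_l (x y : A) : (x^' * y)^' * x = x * (x^' * y)^'.
Proof.
(* [(x' y)'] is itself of the form [(x' w')'], which [huntington_commute_r] covers. *)
have split : x^' * ((x^' * y)^' * (x^' * y^')^'^')^' = x^' * y.
  by rewrite -{1}(huntington x y) (huntington (x^' * y)).
by have := huntington_commute_r x ((x^' * y)^' * (x^' * y^')^'^'); rewrite split.
Qed.

Lemma meet_sq_rotate (x y z : A) : x * (y * (x * z)) = z * (y * (x * x)).
Proof. by rewrite (meet_rotate y) -(meet_rotate (x * x)) meet_sq_l. Qed.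

Lemma huntington_swap (x y z : A) : (x^' * y)^' * z * x = z * (x * (x^' * y)^').
Proof.
rewrite -(huntington_rotate x y) meet_sq_rotate (meet_rotate (x^' * y^')^').
by rewrite huntington huntington_commute_l.
Qed.

Lemma rotate_meetC (x y : A) : x * y = y * x.
Proof.
rewrite -[X in X * _ = _](huntington_rotate_r x x y^') huntington_swap.
by rewrite meet_rotate huntington_rotate_r.
Qed.

Lemma rotate_meetA (x y z : A) : x * (y * z) = x * y * z.
Proof. by rewrite [RHS]rotate_meetC [RHS]meet_rotate. Qed.

End Rotation.

Section Huntington.

Variable A : algebra.

Hypothesis meetC : forall x y : A, x * y = y * x.
Hypothesis meetA : forall x y z : A, x * (y * z) = x * y * z.
Hypothesis huntington : forall x y : A, (x^' * y)^' * (x^' * y^')^' = x.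

Lemma meetCA (x y z : A) : x * (y * z) = y * (x * z).
Proof. by rewrite !meetA (meetC x). Qed.

Lemma huntington_sym (x y : A) : x * (x * y^')^' = y * (x^' * y)^'.
Proof.
rewrite -[X in X * _ = _](huntington x y) -[X in _ = X * _](huntington y x).
by rewrite (meetC y^' x) (meetC y^' x^') [LHS]meetC meetCA [LHS]meetC.
Qed.

Lemma compK (x : A) : x^'^' = x.
Proof.
have comp_comp2 (u : A) : u * u^' = u^' * u^'^'.
  have E : u^' * ((u^'^' * u^')^' * (u^' * u^'^'^')^') = u^'^' * u^'.
    by rewrite meetCA huntington_sym meetCA huntington.
  by move: E; rewrite (meetC u^'^' u^') huntington meetC => <-; rewrite meetC.
rewrite -[LHS](huntington x^'^' x^') -[RHS](huntington x x^'^').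
by rewrite (meetC x^'^'^' x^') (meetC x^'^'^') -comp_comp2 meetC.
Qed.

Lemma huntington_compr (x y : A) : (x * y)^' * (x * y^')^' = x^'.
Proof. by have := huntington x^' y; rewrite compK. Qed.

Lemma meet_comp_const (x y : A) : x * x^' = y * y^'.
Proof.
rewrite -[X in _ * X = _](huntington_compr x y) meetCA huntington_sym meetCA.
by rewrite (meetC x y) (meetC x^' y) huntington_compr.
Qed.

Lemma meet_comp_absorb (x y : A) : x * (y * y^') = y * y^'.
Proof.
rewrite (meet_comp_const y x) meetA -[X in _ * X = _](huntington_compr x x) meetA.
by rewrite (meet_comp_const (x * x) x) (meet_comp_const (x * x^') x).
Qed.

Lemma huntington_comp_self (x y : A) : (x^' * x^')^' * (y * y^')^' = x.
Proof. by rewrite -(meet_comp_const x^' y) huntington. Qed.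

Lemma meet_comp_unit (x y : A) : (y * y^')^' * x = x.
Proof.
have unit_idem : (y * y^')^' * (y * y^')^' = (y * y^')^'.
  by rewrite -[RHS](huntington (y * y^')^' y) compK !(meetC (y * y^')) !meet_comp_absorb.
by rewrite -[X in _ * X = _](huntington_comp_self x y) meetCA unit_idem huntington_comp_self.
Qed.

Lemma meet_idem (x : A) : x * x = x.
Proof.
have comp_meet_comp (u : A) : (u^' * u^')^' = u.
  by rewrite -[RHS](huntington_comp_self u u) meetC meet_comp_unit.
have := comp_meet_comp x^'; rewrite compK => comp_meet.
by rewrite -[LHS]compK comp_meet compK.
Qed.

Lemma meet_cases (u a c : A) : u * a = u * c -> u^' * a = u^' * c -> a = c.
Proof.
move=> Eu Eu'; rewrite -[a]compK -[c]compK.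
by rewrite -(huntington_compr a u) -(huntington_compr c u) !(meetC a) !(meetC c) Eu Eu'.
Qed.

Definition lit (b : bool) (a : A) : A := if b then a else a^'.

Fixpoint minterm (v : nat -> A) (b : nat -> bool) (n : nat) : A :=
  match n with
  | 0 => lit (b 0) (v 0)
  | S k => minterm v b k * lit (b (S k)) (v (S k))
  end.

Lemma minterm_ext (v : nat -> A) (b c : nat -> bool) (n : nat) :
  (forall i, i <= n -> b i = c i) -> minterm v b n = minterm v c n.
Proof.
elim: n => [|k IH] bc /=; first by rewrite bc.
by rewrite IH ?bc // => i ?; apply: bc; lia.
Qed.

Lemma minterm_lit (v : nat -> A) (b : nat -> bool) (n i : nat) :
  i <= n -> minterm v b n * lit (b i) (v i) = minterm v b n.
Proof.
elim: n => [|k IH] le_in /=.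
  have -> : i = 0 by lia.
  exact: meet_idem.
case: (Nat.eq_dec i (S k)) => [->|ne_ik]; first by rewrite -meetA meet_idem.
by rewrite -meetA (meetC _ (lit _ (v i))) meetA IH //; lia.
Qed.

Fixpoint max_var (t : term) : nat :=
  match t with
  | Var i => i
  | Meet s u => Nat.max (max_var s) (max_var u)
  | Comp s => max_var s
  end.

Lemma minterm_eval (v : nat -> A) (b : nat -> bool) (n : nat) (t : term) :
  max_var t <= n ->
  let m := minterm v b n in
  m * eval A v t = if eval two b t then m else m * m^'.
Proof.
move=> le_tn m; elim: t le_tn => [i|s IHs u IHu|s IHs] /= le_tn.
- have := minterm_lit v b n i le_tn; rewrite -/m.
  case: (b i) => //= E; rewrite -[in LHS]E.
  by rewrite -meetA (meetC _ (v i)) (meet_comp_const (v i) m) meet_comp_absorb.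
- have -> : m * (eval A v s * eval A v u) = m * eval A v s * (m * eval A v u).
    by rewrite -[RHS]meetA (meetCA _ m) [RHS]meetA meet_idem.
  rewrite IHs ?IHu; try lia.
  case: (eval two b s); case: (eval two b u) => /=;
    by rewrite ?meet_idem ?meet_comp_absorb // meetC meet_comp_absorb.
- move: IHs => /(_ le_tn); case: (eval two b s) => /= E.
    by rewrite -[in LHS]E -meetA (meet_comp_const (eval A v s) m) meet_comp_absorb.
  have := huntington_compr m (eval A v s).
  rewrite E meet_comp_unit => E'.
  by rewrite -[LHS]compK E' compK.
Qed.

Lemma minterm_separate (v : nat -> A) (n : nat) (a c : A) :
  (forall b, minterm v b n * a = minterm v b n * c) -> a = c.
Proof.
elim: n a c => [|k IH] a c sep.
  by apply: (meet_cases (v 0)); [exact: (sep (fun _ => true)) | exact: (sep (fun _ => false))].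
have sep_lit beta : lit beta (v (S k)) * a = lit beta (v (S k)) * c.
  apply: IH => b.
  set b' := fun i => if i =? S k then beta else b i.
  have b'_k : minterm v b' k = minterm v b k.
    by apply: minterm_ext => i le_ik; rewrite /b'; case: (Nat.eqb_spec i (S k)) => //; lia.
  by have := sep b'; rewrite /= b'_k /b' Nat.eqb_refl -!meetA.
by apply: (meet_cases (v (S k))); [exact: (sep_lit true) | exact: (sep_lit false)].
Qed.

Theorem huntington_in_BA : in_BA A.
Proof.
move=> [s t] two_st v; rewrite /satisfies /= in two_st *.
apply: (minterm_separate v (Nat.max (max_var s) (max_var t))) => b.
by rewrite !minterm_eval ?two_st //; lia.
Qed.

End Huntington.

Lemma models_A6_J5' (A : algebra) :
  models A [A6; J5'] ->
  (forall x y z : A, x * (y * z) = y * (z * x)) /\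
  (forall x y : A, (x^' * y)^' * (x^' * y^')^' = x).
Proof.
move=> mod_A; split.
- move=> a b c.
  exact: (mod_A A6 (in_eq _ _) (fun n => match n with 0 => a | 1 => b | _ => c end)).
- move=> a b; symmetry.
  exact: (mod_A J5' (in_cons _ _ _ (in_eq _ _)) (fun n => match n with 0 => a | _ => b end)).
Qed.

Lemma two_models_A6_J5' : models two [A6; J5'].
Proof.
move=> e [<-|[<-|[]]] v; rewrite /= /x /y /z /=.
- by case: (v 0); case: (v 1); case: (v 2).
- by case: (v 0); case: (v 1).
Qed.

Lemma in_BA_models (E : list identity) (A : algebra) :
  models two E -> in_BA A -> models A E.
Proof. by move=> two_E BA_A e /two_E; apply: BA_A. Qed.

Lemma J5'_does_not_imply_A6 : ~ consequence [J5'] A6.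
Proof.
move=> J5'_A6.
have left_proj : models (Algebra bool (fun a _ => a) (fun a => a)) [J5'].
  by move=> e [<-|[]] v.
by have := J5'_A6 _ left_proj (fun n => if n is 0 then true else false).
Qed.

Lemma A6_does_not_imply_J5' : ~ consequence [A6] J5'.
Proof.
move=> A6_J5'.
have meet_false : models (Algebra bool (fun _ _ => false) negb) [A6].
  by move=> e [<-|[]] v.
by have := A6_J5' _ meet_false (fun _ => true).
Qed.

Theorem theorem4p1 : is_n_base 2 [A6; J5'] in_BA.
Proof.
split=> //; split.
- move=> A; split.
  + case/models_A6_J5' => rotate hunt.
    exact: huntington_in_BA (rotate_meetC _ rotate hunt) (rotate_meetA _ rotate hunt) hunt.
  + exact: in_BA_models two_models_A6_J5'.
- move=> [|[|i]] d /= lt_i.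
  + exact: J5'_does_not_imply_A6.
  + exact: A6_does_not_imply_J5'.
  + lia.
Qed.
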